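(* Let $A=(a(x),dF(x))$ and $B=(b(x),dF(x))$ be games and $p\in[0,1]$. If $g(p)$ exists, then $f(p)\le g(p)$.
   Context: A game is a pair $(a(x),dF(x))$ with $dF$ a probability measure on $\mathbb{R}$ and $a\ge0$ measurable with finite positive integral. A real $r$ is fixed; $\exp(-\infty)=0$. For $p\in[0,1]$ put $c_p(x):=pa(x)+(1-p)b(x)$ and $f(p):=\exp(\int\log c_p(x)\,dF(x))/e^r$. $g(p)$ denotes the value $u>0$ such that for some $t_u$ (with $0<t_u\le1$) the system $\exp\big(\int\log(\frac{c_p(x)}{u}t_u-t_u+1)\,dF(x)\big)=e^r$, $\int\frac{c_p(x)-u}{c_p(x)t_u-ut_u+u}\,dF(x)=0$ holds; when such a solution exists it is unique, and ''$g(p)$ exists'' means such a solution exists. *)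

From HB Require Import structures.
From mathcomp Require Import all_boot all_order all_algebra.
From mathcomp Require Import all_classical all_reals all_analysis.
Set Implicit Arguments. Unset Strict Implicit. Unset Printing Implicit Defensive.
Import Order.TTheory GRing.Theory Num.Theory.
Local Open Scope ring_scope.
Local Open Scope classical_set_scope.

(* log with the convention log 0 = -oo (only applied to nonnegative arguments) *)
Definition elog {R : realType} (x : R) : \bar R :=
  if 0 < x then (ln x)%:E else -oo%E.

(* A game (a(x), dF(x)): dF = P a probability measure on the Borel sets of R,
   a >= 0 measurable with finite positive integral. *)
Definition is_game {R : realType} (P : probability (measurableTypeR R) R)
    (a : measurableTypeR R -> R) : Prop :=
  [/\ measurable_fun setT a,
      (forall x, 0 <= a x),
      P.-integrable setT (EFin \o a) &
      (0 < \int[P]_x (a x)%:E)%E].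

Definition cp {R : realType} (a b : measurableTypeR R -> R) (p : R)
    (x : measurableTypeR R) : R :=
  p * a x + (1 - p) * b x.

Definition fval {R : realType} (P : probability (measurableTypeR R) R)
    (a b : measurableTypeR R -> R) (r p : R) : \bar R :=
  (expeR (\int[P]_x elog (cp a b p x)) * ((expR r)^-1)%:E)%E.

(* (u, t_u) solves the system defining g(p) *)
Definition g_system {R : realType} (P : probability (measurableTypeR R) R)
    (a b : measurableTypeR R -> R) (r p u t : R) : Prop :=
  [/\ 0 < u, 0 < t <= 1,
      expeR (\int[P]_x elog (cp a b p x / u * t - t + 1)) = (expR r)%:E &
      (\int[P]_x ((cp a b p x - u) / (cp a b p x * t - u * t + u))%:E = 0)%E].

From HB Require Import structures.
From mathcomp Require Import all_boot all_order all_algebra.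
From mathcomp Require Import all_classical all_reals all_analysis.
From mathcomp Require Import measurable_realfun.
From mathcomp Require Import ring lra.
Set Implicit Arguments. Unset Strict Implicit. Unset Printing Implicit Defensive.
Import Order.TTheory GRing.Theory Num.Theory.
Local Open Scope ring_scope.
Local Open Scope classical_set_scope.

(** Write [c] for [c_p(x)] and [D := t c + (1 - t) u], so that the argument
    of the logarithm in the system for [g(p)] is [D / u].  Concavity of [ln]
    at [D] gives [ln c <= ln u + ln (D / u) + (1 - t) (c - u) / D] pointwise.
    Integrating against [dF], the system says that the middle term integrates
    to [r] and the last one to [0]; hence [\int log c_p dF <= ln u + r], that
    is [f(p) <= u]. *)

Section integral_complements.
Context d (T : measurableType d) (R : realType) (mu : {measure set T -> \bar R}).
Local Open Scope ereal_scope.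

Lemma le_integral_measurable (f g : T -> \bar R) :
  measurable_fun setT f -> measurable_fun setT g ->
  (forall x, f x <= g x) -> \int[mu]_x f x <= \int[mu]_x g x.
Proof.
move=> mf mg fg; rewrite integralE [leRHS]integralE leeB//.
- apply: ge0_le_integral => //; [exact: measurable_funepos..|].
  by move=> x _; apply: (@funepos_le _ _ setT) => [y _|]; [exact: fg|exact: in_setT].
- apply: ge0_le_integral => //; [exact: measurable_funeneg..|].
  by move=> x _; apply: (@funeneg_le _ _ setT) => [y _|]; [exact: fg|exact: in_setT].
Qed.

Lemma fin_num_integrable (f : T -> \bar R) :
  measurable_fun setT f -> \int[mu]_x f x \is a fin_num ->
  mu.-integrable setT f.
Proof.
move=> mf fin_f; apply/integrableP; split => //.
by apply/abse_integralP => //; rewrite -fin_num_abs.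
Qed.

End integral_complements.

Section measurable_complements.
Context d (T : measurableType d) (R : realType).

(* [f^-1 = f * (f^2)^-1] and [(f^2)^-1 = (f^2) `^ (-1)] as [f^2 >= 0]; both
   sides vanish where [f = 0]. *)
Lemma measurable_funV (f : T -> R) :
  measurable_fun setT f -> measurable_fun setT (fun x => (f x)^-1).
Proof.
move=> mf.
have -> : (fun x => (f x)^-1) = (fun x => f x * (f x ^+ 2) `^ (-1)).
  apply/funext => x; rewrite powR_inv1 ?sqr_ge0 // -exprVn expr2 mulrA.
  by have [->|fx0] := eqVneq (f x) 0; rewrite ?mul0r ?invr0 // mulfV // mul1r.
apply: (measurable_funM mf).
exact: measurableT_comp (measurable_powR _) (measurable_funX 2 mf).
Qed.

Lemma measurable_elog (f : T -> R) :
  measurable_fun setT f -> measurable_fun setT (fun x => elog (f x)).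
Proof.
move=> mf; apply: measurable_fun_ifT.
- exact: measurable_fun_ltr.
- by apply/measurable_EFinP; exact: measurableT_comp.
- exact: measurable_cst.
Qed.

End measurable_complements.

Lemma ln_le_tangent (R : realType) (x y : R) :
  0 < x -> 0 < y -> ln x <= ln y + (x - y) / y.
Proof.
move=> x0 y0; rewrite -lerBlDl -ln_div ?posrE //.
have -> : (x - y) / y = x / y - 1 by rewrite mulrBl divff ?gt_eqF.
rewrite -[in ln _](addrNK 1 (x / y)) addrC.
by apply: le_ln1Dx; rewrite -subr_gt0 opprK subrK divr_gt0.
Qed.

Lemma elog_le_ln_mixture (R : realType) (c u t : R) :
  0 <= c -> 0 < u -> 0 < t <= 1 ->
  (elog c <= (ln u)%:E + elog (c / u * t - t + 1)
             + ((1 - t) * ((c - u) / (c * t - u * t + u)))%:E)%E.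
Proof.
move=> c_ge0 u0 /andP[t0 t1]; rewrite /elog.
have [c0|] := ltP 0 c; last by rewrite leNye.
set D := c * t - u * t + u.
have D0 : 0 < D by rewrite /D; nra.
have -> : c / u * t - t + 1 = D / u by rewrite /D; field; rewrite gt_eqF.
rewrite divr_gt0 // -!EFinD lee_fin ln_div ?posrE // addrCA subrr addr0.
have -> : (1 - t) * ((c - u) / D) = (c - D) / D by rewrite /D; field; rewrite gt_eqF.
exact: ln_le_tangent.
Qed.

Section log_integral_bound.
Context d (T : measurableType d) (R : realType) (P : probability T R).
Variables (c : T -> R) (u t r : R).
Hypotheses (mc : measurable_fun setT c) (c_ge0 : forall x, 0 <= c x).
Hypotheses (u_gt0 : 0 < u) (t01 : 0 < t <= 1).
Local Open Scope ereal_scope.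

Let z x := (c x / u * t - t + 1)%R.
Let h x := ((c x - u) / (c x * t - u * t + u))%R.

Hypothesis integral_elog_z : \int[P]_x elog (z x) = r%:E.
Hypothesis integral_h : \int[P]_x (h x)%:E = 0.

Let mz : measurable_fun setT z.
Proof.
apply: measurable_funD => //; apply: measurable_funB => //.
by apply: measurable_funM => //; apply: measurable_funM.
Qed.

Let mh : measurable_fun setT h.
Proof.
apply: measurable_funM; first exact: measurable_funB.
apply: measurable_funV; apply: measurable_funD => //.
by apply: measurable_funB => //; apply: measurable_funM.
Qed.

Let integrable_elog_z : P.-integrable setT (fun x => elog (z x)).
Proof. by apply: fin_num_integrable; [exact: measurable_elog|rewrite integral_elog_z]. Qed.

Let integrable_h : P.-integrable setT (EFin \o h).
Proof. by apply: fin_num_integrable; [exact/measurable_EFinP|rewrite /= integral_h]. Qed.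

Lemma integral_elog_le : \int[P]_x elog (c x) <= (ln u + r)%:E.
Proof.
pose bound x := (ln u)%:E + elog (z x) + ((1 - t) * h x)%:E.
have integrable_cst : P.-integrable setT (fun=> (ln u)%:E).
  exact: (@finite_measure_integrable_cst _ _ _ P setT (ln u) measurableT).
have integrable_th : P.-integrable setT (fun x => ((1 - t) * h x)%:E).
  exact: eq_integrable (integrableZl measurableT (1 - t) integrable_h).
have -> : (ln u + r)%:E = \int[P]_x bound x.
  rewrite integralD //; last exact: integrableD.
  rewrite integralD // integral_elog_z integral_cst //.
  rewrite [X in _ * X](probability_setT P) mule1.
  under eq_integral do rewrite EFinM.
  by rewrite integralZl //= integral_h mule0 adde0.
apply: le_integral_measurable; first exact: measurable_elog.
  apply: emeasurable_funD; first by apply: emeasurable_funD => //; exact: measurable_elog.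
  by apply/measurable_EFinP; apply: measurable_funM.
by move=> x; apply: elog_le_ln_mixture.
Qed.

End log_integral_bound.

Theorem lemmaD6 (R : realType) (P : probability (measurableTypeR R) R)
    (a b : measurableTypeR R -> R) (r p : R) :
  is_game P a -> is_game P b -> 0 <= p <= 1 ->
  forall u t : R, g_system P a b r p u t ->
  (fval P a b r p <= u%:E)%E.
Proof.
move=> [ma a_ge0 _ _] [mb b_ge0 _ _] /andP[p0 p1] u t [u0 t01 elog_eq h_eq].
have mc : measurable_fun setT (cp a b p).
  by apply: measurable_funD; apply: measurable_funM.
have c_ge0 x : 0 <= cp a b p x.
  by apply: addr_ge0; apply: mulr_ge0 => //; rewrite subr_ge0.
have integral_elog : (\int[P]_x elog (cp a b p x / u * t - t + 1) = r%:E)%E.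
  by apply: expeR_inj; rewrite elog_eq.
have le_integral_elog := integral_elog_le mc c_ge0 u0 t01 integral_elog h_eq.
rewrite -lee_expeR in le_integral_elog; rewrite /fval.
apply: le_trans (lee_wpmul2r _ le_integral_elog) _.
  by rewrite lee_fin invr_ge0 expR_ge0.
by rewrite /= -EFinM lee_fin expRD lnK ?posrE // mulfK // gt_eqF // expR_gt0.
Qed.
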